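(* Let $k\ge 3$ and let $\mathbf a=(a_1,\dots,a_k)$ be positive integers with $\gcd(a_1,\dots,a_k)=1$. Then $\mathcal T(\mathbf a)$ is old regular if and only if there is an index $i\in\{1,\dots,k\}$ such that $\mathcal T(\mathbf a[i])$ is primitive and regular and $a_i\mathbb Z_p\subseteq\overline{DQ_p(\mathbf a[i])}$ for all odd primes $p$.
   Context: For positive integers $a_1,\dots,a_k$, the triangular form $\mathcal T(a_1,\dots,a_k)$ is the polynomial $\sum_{i=1}^k a_i\,\frac{x_i(x_i+1)}{2}$. A nonnegative integer $n$ is represented by it if $\sum a_i x_i(x_i+1)/2=n$ has a solution $x\in\mathbb Z^k$, and locally represented if this equation has a solution in $\mathbb Z_p^k$ for every prime $p$. The form is primitive if the gcd of its coefficients is 1, and regular if it represents every positive integer that it locally represents. For $\mathbf a=(a_1,\dots,a_k)$ and $1\le i\le k$, $\mathbf a[i]$ denotes the vector obtained by deleting $a_i$. A regular form $\mathcal T(\mathbf a)$ is old if there is an index $i$ such that $\mathcal T(\mathbf a[i])$ represents exactly the same set of positive integers as $\mathcal T(\mathbf a)$; it is new if it is regular and not old. For a vector $\mathbf b=(b_1,\dots,b_r)$ of positive integers and an odd prime $p$, $\overline{DQ_p(\mathbf b)}=\{\gamma\in\mathbb Z_p:\gamma=\sum_i b_iy_i^2\text{ for some }y_i\in\mathbb Z_p\}$. *)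

From mathcomp Require Import all_boot all_order all_algebra.
Set Implicit Arguments. Unset Strict Implicit. Unset Printing Implicit Defensive.
Import Order.TTheory GRing.Theory Num.Theory.
Local Open Scope ring_scope.

(* A coefficient vector a = (a_1,...,a_k) is a [seq nat]; a`_j is a_(j+1). *)

Definition tri (x : int) : int := ((x * (x + 1)) %/ 2)%Z.

Definition represents (a : seq nat) (n : nat) : Prop :=
  exists x : seq int, size x = size a /\
    \sum_(j < size a) (nth 0%N a j)%:Z * tri (nth 0 x j) = n%:Z.

(* p-adic integers Z_p = inverse limit of Z/p^m Z : an element is a
   sequence x of integer representatives with x (m+1) = x m (mod p^m),
   x m representing the residue modulo p^m. *)
Definition padic (p : nat) (x : nat -> int) : Prop :=
  forall m : nat, ((p ^ m)%:Z %| x m.+1 - x m)%Z.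

Definition zfun0 : nat -> int := fun _ => 0.

(* T(a) represents n over Z_p: there are x_1..x_k in Z_p with
   sum a_j x_j (x_j+1) / 2 = n, i.e. (Z_p being a domain of char 0)
   sum a_j x_j (x_j+1) = 2n in Z_p, i.e. modulo every p^m. *)
Definition padic_represents (p : nat) (a : seq nat) (n : nat) : Prop :=
  exists x : seq (nat -> int), size x = size a /\
    (forall j, (j < size a)%N -> padic p (nth zfun0 x j)) /\
    forall m : nat,
      ((p ^ m)%:Z %|
         \sum_(j < size a) (nth 0%N a j)%:Z * (nth zfun0 x j m * (nth zfun0 x j m + 1))
         - 2%:Z * n%:Z)%Z.

Definition loc_represents (a : seq nat) (n : nat) : Prop :=
  forall p : nat, prime p -> padic_represents p a n.

Definition coef_gcd (a : seq nat) : nat := foldr gcdn 0%N a.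

Definition primitive (a : seq nat) : Prop := coef_gcd a = 1%N.

Definition regular (a : seq nat) : Prop :=
  forall n : nat, (0 < n)%N -> loc_represents a n -> represents a n.

(* a[i] : delete the i-th entry (0-based). *)
Definition del (a : seq nat) (i : nat) : seq nat := take i a ++ drop i.+1 a.

Definition old_regular (a : seq nat) : Prop :=
  regular a /\
  exists i : nat, (i < size a)%N /\
    forall n : nat, (0 < n)%N -> (represents (del a i) n <-> represents a n).

Definition new_regular (a : seq nat) : Prop := regular a /\ ~ old_regular a.

(* gamma in closure(DQ_p(b)): gamma = sum b_j y_j^2 with y_j in Z_p. *)
Definition in_DQp (p : nat) (b : seq nat) (g : nat -> int) : Prop :=
  exists y : seq (nat -> int), size y = size b /\
    (forall j, (j < size b)%N -> padic p (nth zfun0 y j)) /\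
    forall m : nat,
      ((p ^ m)%:Z %| g m - \sum_(j < size b) (nth 0%N b j)%:Z * (nth zfun0 y j m) ^+ 2)%Z.

Definition scaled_Zp_sub_DQp (p : nat) (c : nat) (b : seq nat) : Prop :=
  forall g : nat -> int, padic p g -> in_DQp p b (fun m => c%:Z * g m).

(* Write b = a[i] and c = a_i. Over Z_2 nothing is lost by dropping c once b
   is primitive: an odd coefficient of b solves B x(x+1)/2 = n by Hensel's
   lemma. Over Z_p with p odd, completing the square 8 T(x) + sum a_j =
   sum a_j (2x_j+1)^2 turns T into the diagonal form Q, and dropping c is
   harmless when c Z_p is inside closure(DQ_p(b)): a target q + c e is then
   either in c Z_p (when v_p(q) >= v_p(c)) or q times a unit congruent to 1
   mod p, hence q times a square. Conversely, if T(b) represents what T(a)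
   does, choosing x_i = (p^(M+1) - 1)/2 shows that the values of Q(b) modulo
   p^M are stable under subtracting c, so they contain c Z_p; and since T(a)
   represents c, so does T(b), which forces b to be primitive. A compactness
   (Koenig) argument moves between solvability modulo every p^M and over Z_p. *)

From mathcomp Require Import all_boot all_order all_algebra.
From mathcomp Require Import ring zify.
From Stdlib Require Import Classical ClassicalEpsilon.
Set Implicit Arguments. Unset Strict Implicit. Unset Printing Implicit Defensive.
Import Order.TTheory GRing.Theory Num.Theory.
Local Open Scope ring_scope.

Lemma dvdz_exp2l_nat (p m n : nat) : (m <= n)%N -> ((p ^ m)%:Z %| (p ^ n)%:Z)%Z.
Proof. by move=> le_mn; rewrite dvdzE dvdn_exp2l. Qed.

Lemma dvdz_sub_modz (x q : int) : (q %| x - (x %% q)%Z)%Z.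
Proof. by rewrite -eqz_mod_dvd eq_sym modz_mod. Qed.

Lemma dvdz_sub_trans (q x y z : int) :
  (q %| x - y)%Z -> (q %| y - z)%Z -> (q %| x - z)%Z.
Proof. by move=> qxy qyz; rewrite (_ : x - z = (x - y) + (y - z)); [exact: rpredD | ring]. Qed.

Lemma PoszX (n M : nat) : (n ^ M)%:Z = n%:Z ^+ M.
Proof. by rewrite -[LHS]natz natrX natz. Qed.

Definition pronic (x : int) : int := x * (x + 1).

Lemma dvdz2_pronic (x : int) : (2 %| pronic x)%Z.
Proof.
rewrite /pronic (divz_eq x 2); set q := (x %/ 2)%Z.
have : (x %% 2)%Z = 0 \/ (x %% 2)%Z = 1.
  have : 0 <= (x %% 2)%Z by apply: modz_ge0.
  have : (x %% 2)%Z < 2 by apply: ltz_pmod.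
  lia.
by case=> ->; apply/dvdzP; [exists (q * (q * 2 + 1)) | exists ((q * 2 + 1) * (q + 1))]; ring.
Qed.

Lemma tri_double (x : int) : 2 * tri x = pronic x.
Proof. by rewrite /tri mulrC divzK // dvdz2_pronic. Qed.

Lemma tri_ge0 (x : int) : 0 <= tri x.
Proof. have := tri_double x; rewrite /pronic; nia. Qed.

Lemma tri_odd_sq (x : int) : 8 * tri x = (2 * x + 1) ^+ 2 - 1.
Proof. by rewrite (_ : 8 = 4 * 2) // -mulrA tri_double /pronic; ring. Qed.

Lemma tri0 : tri 0 = 0. Proof. by []. Qed.
Lemma tri1 : tri 1 = 1. Proof. by []. Qed.

Section DeleteInsert.
Variable T : Type.
Implicit Types (s : seq T) (i j : nat) (e : T).

(* [del] is [delete] at [T := nat], so these lemmas apply to [del a i]. *)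
Definition delete s i := take i s ++ drop i.+1 s.
Definition insert s i e := take i s ++ e :: drop i s.

Lemma size_delete s i : (i < size s)%N -> size (delete s i) = (size s).-1.
Proof. by move=> lt_i; rewrite size_cat size_take size_drop lt_i; lia. Qed.

Lemma nth_delete x0 s i j : (i < size s)%N -> nth x0 (delete s i) j = nth x0 s (bump i j).
Proof.
move=> lt_i; rewrite nth_cat size_take lt_i /bump.
case: ltnP => [lt_ji | le_ij]; first by rewrite nth_take // add0n.
by rewrite nth_drop; congr nth; lia.
Qed.

Lemma size_insert s i e : (i <= size s)%N -> size (insert s i e) = (size s).+1.
Proof. by move=> le_i; rewrite size_cat /= size_take size_drop; case: ltnP; lia. Qed.

Lemma nth_insert x0 s i e j : (i <= size s)%N ->
  nth x0 (insert s i e) (bump i j) = nth x0 s j.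
Proof.
move=> le_i; rewrite nth_cat size_take_min (minn_idPl le_i) /bump.
case: (ltnP j i) => [lt_ji | le_ij].
  by rewrite add0n lt_ji nth_take.
rewrite add1n ifF; last lia.
by rewrite subSn //= nth_drop subnKC.
Qed.

Lemma nth_insert_at x0 s i e : (i <= size s)%N -> nth x0 (insert s i e) i = e.
Proof. by move=> le_i; rewrite nth_cat size_take_min (minn_idPl le_i) ltnn subnn. Qed.

Lemma insert_delete x0 s i : (i < size s)%N -> insert (delete s i) i (nth x0 s i) = s.
Proof.
move=> lt_i; rewrite /insert /delete take_size_cat ?size_take ?lt_i //.
by rewrite drop_size_cat ?size_take ?lt_i // -drop_nth // cat_take_drop.
Qed.

End DeleteInsert.

Definition wsum (F : int -> int) (a : seq nat) (x : seq int) : int :=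
  \sum_(j < size a) (nth 0%N a j)%:Z * F (nth 0 x j).

Definition csum (a : seq nat) : int := \sum_(j < size a) (nth 0%N a j)%:Z.

Definition sq (y : int) : int := y ^+ 2.

Definition odd_vec (x : seq int) : seq int := [seq 2 * u + 1 | u <- x].

Lemma big_del_nth (F : nat -> int) a i : (i < size a)%N ->
  \sum_(j < size a) F j = F i + \sum_(j < size (del a i)) F (bump i j).
Proof. by move=> lt_i; rewrite (bigD1_ord (Ordinal lt_i)) //= size_delete. Qed.

Lemma size_insert_del a (x : seq int) i e : (i < size a)%N -> size x = size (del a i) ->
  size (insert x i e) = size a.
Proof. by move=> lt_i sz_x; rewrite size_insert sz_x size_delete //; lia. Qed.

Lemma wsum_insert F a x i e : (i < size a)%N -> size x = size (del a i) ->
  wsum F a (insert x i e) = (nth 0%N a i)%:Z * F e + wsum F (del a i) x.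
Proof.
move=> lt_i sz_x; have le_i : (i <= size x)%N by rewrite sz_x size_delete //; lia.
rewrite /wsum (big_del_nth (fun j => (nth 0%N a j)%:Z * F (nth 0 (insert x i e) j)) lt_i).
rewrite nth_insert_at //.
by congr (_ + _); apply: eq_bigr => j _; rewrite nth_insert // -nth_delete.
Qed.

Lemma csum_del a i : (i < size a)%N -> csum a = (nth 0%N a i)%:Z + csum (del a i).
Proof.
move=> lt_i; rewrite /csum (big_del_nth (fun j => (nth 0%N a j)%:Z) lt_i).
by congr (_ + _); apply: eq_bigr => j _; rewrite -nth_delete.
Qed.

Lemma wsum_pronic a x : wsum pronic a x = 2 * wsum tri a x.
Proof. by rewrite /wsum mulr_sumr; apply: eq_bigr => j _; rewrite -tri_double; ring. Qed.

Lemma wsum_sq_odd_vec a x : size x = size a ->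
  wsum sq a (odd_vec x) = 4 * wsum pronic a x + csum a.
Proof.
move=> sz_x; rewrite /wsum /csum mulr_sumr -big_split /=.
by apply: eq_bigr => j _; rewrite /odd_vec (nth_map 0) ?sz_x // /sq /pronic; ring.
Qed.

Lemma wsum_sq_scale a (s : int) x :
  wsum sq a [seq s * u | u <- x] = s ^+ 2 * wsum sq a x.
Proof.
rewrite /wsum mulr_sumr; apply: eq_bigr => j _.
have -> : nth 0 [seq s * u | u <- x] j = s * nth 0 x j.
  case: (ltnP j (size x)) => lt_j; first exact: nth_map.
  by rewrite !nth_default ?size_map ?mulr0.
by rewrite /sq exprMn mulrCA.
Qed.

Lemma wsum_ge0 F a x : (forall u, 0 <= F u) -> 0 <= wsum F a x.
Proof. by move=> F_ge0; apply: sumr_ge0 => j _; apply: mulr_ge0. Qed.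

Lemma wsum_cong (q : int) F a x y :
  (forall u v, (q %| u - v)%Z -> (q %| F u - F v)%Z) ->
  (forall j, (q %| nth 0 x j - nth 0 y j)%Z) -> (q %| wsum F a x - wsum F a y)%Z.
Proof.
move=> F_cong xy; rewrite /wsum -sumrB; apply: rpred_sum => j _.
by rewrite -mulrBr dvdz_mull // F_cong.
Qed.

Lemma pronic_cong (q u v : int) : (q %| u - v)%Z -> (q %| pronic u - pronic v)%Z.
Proof.
by move=> quv; rewrite (_ : _ - _ = (u - v) * (u + v + 1)) ?dvdz_mulr // /pronic; ring.
Qed.

Lemma sq_cong (q u v : int) : (q %| u - v)%Z -> (q %| sq u - sq v)%Z.
Proof. by move=> quv; rewrite (_ : _ - _ = (u - v) * (u + v)) ?dvdz_mulr // /sq; ring. Qed.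

Definition at_level (X : seq (nat -> int)) (m : nat) : seq int := [seq f m | f <- X].

Lemma nth_at_level X m j : nth 0 (at_level X m) j = nth zfun0 X j m.
Proof.
case: (ltnP j (size X)) => lt_j; first by rewrite (nth_map zfun0).
by rewrite !nth_default // size_map.
Qed.

Definition red (q : int) (v : seq int) : seq int := [seq (x %% q)%Z | x <- v].

Lemma red_red (p m n : nat) v : (m <= n)%N ->
  red (p ^ m)%:Z (red (p ^ n)%:Z v) = red (p ^ m)%:Z v.
Proof.
move=> le_mn; rewrite /red -map_comp; apply: eq_map => x /=.
apply/eqP; rewrite eqz_mod_dvd -opprB rpredN.
exact: dvdz_trans (dvdz_exp2l_nat p le_mn) (dvdz_sub_modz x _).
Qed.

Fixpoint box (k R : nat) : seq (seq int) :=
  if k is k'.+1 then [seq x :: t | x <- [seq Posz r | r <- iota 0 R], t <- box k' R]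
  else [:: [::]].

Lemma mem_box k R (v : seq int) : size v = k ->
  (forall j, (j < k)%N -> 0 <= nth 0 v j < R%:Z) -> v \in box k R.
Proof.
elim: k v => [|k IH] [|x v] //= [sz_v] v_box.
apply: allpairs_f; last by apply: IH => // j lt_j; exact: (v_box j.+1).
have /andP[x_ge0 x_lt] : 0 <= x < R%:Z := v_box 0%N isT.
by rewrite -(gez0_abs x_ge0) map_f // mem_iota add0n -ltz_nat gez0_abs.
Qed.

Section PadicLimit.
Variables (p k : nat) (P : nat -> seq int -> Prop).
Hypothesis p_gt0 : (0 < p)%N.
Hypothesis P_cong : forall M v w,
  (forall j, ((p ^ M)%:Z %| nth 0 v j - nth 0 w j)%Z) -> P M v -> P M w.
Hypothesis P_down : forall M v, P M.+1 v -> P M v.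
Hypothesis P_sol : forall M, exists2 v, size v = k & P M v.

Lemma P_le M N v : (M <= N)%N -> P N v -> P M v.
Proof.
elim: N => [|N IH]; first by case: M.
by rewrite leq_eqVlt => /predU1P[-> // | lt_MN] /P_down; apply: IH.
Qed.

Definition lifts_to N m r := exists x, [/\ size x = k, P N x & red (p ^ m)%:Z x = r].

Definition extendable m r := forall N, lifts_to N m r.

Lemma lifts_to_le N N' m r : (N <= N')%N -> lifts_to N' m r -> lifts_to N m r.
Proof. by move=> le_N [x [sz_x Px red_x]]; exists x; split=> //; exact: P_le Px. Qed.

Lemma not_extendable_uniform m (s : seq (seq int)) :
  (forall r, r \in s -> ~ extendable m r) -> exists N, forall r, r \in s -> ~ lifts_to N m r.
Proof.
elim: s => [|r s IH] not_ext; first by exists 0%N.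
have [N1 N1_fail] := IH (fun r' s_r' => not_ext r' (mem_behead (s := r :: s) s_r')).
have [N2 N2_fail] := not_all_ex_not _ _ (not_ext r (mem_head r s)).
exists (maxn N1 N2) => r'; rewrite inE => /predU1P[-> | s_r'] /(lifts_to_le _).
  by move/(_ N2 (leq_maxr _ _)).
by move/(_ N1 (leq_maxl _ _)); apply: N1_fail.
Qed.

(* Koenig's lemma: only finitely many residue vectors modulo p^(m+1) reduce to
   r, so one of them must remain extendable. *)
Lemma extendable_step m r :
  extendable m r -> exists r', extendable m.+1 r' /\ red (p ^ m)%:Z r' = r.
Proof.
move=> ext_r; apply: NNPP => no_ext.
pose s := [seq r' <- box k (p ^ m.+1) | red (p ^ m)%:Z r' == r].
have [|N N_fail] := @not_extendable_uniform m.+1 s.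
  by move=> r'; rewrite mem_filter => /andP[/eqP red_r' _] ext_r'; apply: no_ext; exists r'.
have [x [sz_x Px red_x]] := ext_r N.
have p_exp_gt0 : 0 < (p ^ m.+1)%:Z by rewrite ltz_nat expn_gt0 p_gt0.
apply: (N_fail (red (p ^ m.+1)%:Z x)); last by exists x.
rewrite mem_filter red_red // red_x eqxx /=; apply: mem_box; first by rewrite size_map.
move=> j lt_j; rewrite /red (nth_map 0) ?sz_x // modz_ge0 ?ltz_pmod //.
by rewrite gt_eqF.
Qed.

Lemma extendable0 : extendable 0 (nseq k 0).
Proof.
move=> N; have [x sz_x Px] := P_sol N; exists x; split=> //.
apply: (@eq_from_nth _ 0) => [|j]; rewrite size_map ?size_nseq // => lt_j.
by rewrite (nth_map 0) // nth_nseq -sz_x lt_j expn0 modz1.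
Qed.

Theorem padic_limit : exists X : seq (nat -> int), [/\ size X = k,
  forall j, (j < k)%N -> padic p (nth zfun0 X j) & forall M, P M (at_level X M)].
Proof.
have step m r : exists r', extendable m r -> extendable m.+1 r' /\ red (p ^ m)%:Z r' = r.
  by case: (classic (extendable m r)) => [/extendable_step[r' ?] | ?]; [exists r' | exists r].
pose next m r := proj1_sig (constructive_indefinite_description _ (step m r)).
have nextP m r : extendable m r -> extendable m.+1 (next m r) /\ red (p ^ m)%:Z (next m r) = r.
  exact: proj2_sig (constructive_indefinite_description _ (step m r)).
pose R m := iteri m next (nseq k 0).
have ext_R m : extendable m (R m).
  by elim: m => [|m IH]; [exact: extendable0 | exact: (nextP _ _ IH).1].
have sz_R m : size (R m) = k by have [x [sz_x _ <-]] := ext_R m 0%N; rewrite size_map.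
have red_R m : red (p ^ m)%:Z (R m.+1) = R m by exact: (nextP _ _ (ext_R m)).2.
exists (mkseq (fun j m => nth 0 (R m) j) k); split; first by rewrite size_mkseq.
  move=> j lt_j m; rewrite nth_mkseq // -[in nth 0 (R m) j]red_R /red (nth_map 0) ?sz_R //.
  exact: dvdz_sub_modz.
move=> M; have [x [sz_x Px red_x]] := ext_R M M.
apply: P_cong Px => j; case: (ltnP j k) => lt_j; last first.
  by rewrite !nth_default ?size_map ?size_iota ?sz_x // subrr dvdz0.
by rewrite nth_at_level nth_mkseq // -red_x /red (nth_map 0) ?sz_x // dvdz_sub_modz.
Qed.

End PadicLimit.

Definition pronic_solvable (p M : nat) (a : seq nat) (n : nat) :=
  exists2 x : seq int, size x = size a & ((p ^ M)%:Z %| wsum pronic a x - 2%:Z * n%:Z)%Z.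

Definition sq_solvable (p M : nat) (b : seq nat) (t : int) :=
  exists2 y : seq int, size y = size b & ((p ^ M)%:Z %| t - wsum sq b y)%Z.

Lemma wsum_at_level F a X m :
  wsum F a (at_level X m) = \sum_(j < size a) (nth 0%N a j)%:Z * F (nth zfun0 X j m).
Proof. by apply: eq_bigr => j _; rewrite nth_at_level. Qed.

Lemma padic_representsP p a n : (0 < p)%N ->
  padic_represents p a n <-> forall M, pronic_solvable p M a n.
Proof.
move=> p_gt0; split=> [[X [sz_X [_ X_sol]]] M | sol].
  by exists (at_level X M); rewrite ?size_map // wsum_at_level; apply: X_sol.
pose P M x := ((p ^ M)%:Z %| wsum pronic a x - 2%:Z * n%:Z)%Z.
have P_cong M v w : (forall j, ((p ^ M)%:Z %| nth 0 v j - nth 0 w j)%Z) -> P M v -> P M w.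
  move=> vw Pv; apply: dvdz_sub_trans Pv; rewrite -opprB rpredN.
  by apply: wsum_cong vw; exact: pronic_cong.
have P_down M v : P M.+1 v -> P M v by apply: dvdz_trans; exact: dvdz_exp2l_nat.
have [X [sz_X X_padic X_sol]] := padic_limit p_gt0 P_cong P_down sol.
by exists X; split=> //; split=> // m; move: (X_sol m); rewrite /P wsum_at_level.
Qed.

Lemma in_DQpP p b g : (0 < p)%N -> padic p g ->
  in_DQp p b g <-> forall M, sq_solvable p M b (g M).
Proof.
move=> p_gt0 g_padic; split=> [[Y [sz_Y [_ Y_sol]]] M | sol].
  by exists (at_level Y M); rewrite ?size_map // wsum_at_level; apply: Y_sol.
pose P M y := ((p ^ M)%:Z %| g M - wsum sq b y)%Z.
have P_cong M v w : (forall j, ((p ^ M)%:Z %| nth 0 v j - nth 0 w j)%Z) -> P M v -> P M w.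
  by move=> vw Pv; apply: dvdz_sub_trans Pv _; apply: wsum_cong vw; exact: sq_cong.
have P_down M v : P M.+1 v -> P M v.
  move=> Pv; apply: (@dvdz_sub_trans _ _ (g M.+1)); first by rewrite -opprB rpredN.
  exact: dvdz_trans (dvdz_exp2l_nat p (leqnSn M)) Pv.
have [Y [sz_Y Y_padic Y_sol]] := padic_limit p_gt0 P_cong P_down sol.
by exists Y; split=> //; split=> // m; move: (Y_sol m); rewrite /P wsum_at_level.
Qed.

Lemma represents_padic a n : represents a n -> loc_represents a n.
Proof.
move=> [x [sz_x x_rep]] p p_prime; apply/(padic_representsP _ _ (prime_gt0 p_prime)) => M.
by exists x; rewrite // wsum_pronic; have -> : wsum tri a x = n%:Z by []; rewrite subrr dvdz0.
Qed.

Lemma represents_del a i n : (i < size a)%N -> represents (del a i) n -> represents a n.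
Proof.
move=> lt_i [x [sz_x x_rep]]; exists (insert x i 0).
split; first exact: size_insert_del.
by rewrite -[LHS]/(wsum tri a _) wsum_insert // tri0 mulr0 add0r.
Qed.

Lemma loc_represents_del a i n : (i < size a)%N ->
  loc_represents (del a i) n -> loc_represents a n.
Proof.
move=> lt_i loc_n p p_prime; have p_gt0 := prime_gt0 p_prime.
apply/(padic_representsP _ _ p_gt0) => M.
have [x sz_x x_sol] := (padic_representsP _ _ p_gt0).1 (loc_n p p_prime) M.
exists (insert x i 0); first exact: size_insert_del.
by rewrite wsum_insert // mulr0 add0r.
Qed.

Lemma sq_solvable_cong p M b (t t' : int) :
  ((p ^ M)%:Z %| t - t')%Z -> sq_solvable p M b t' -> sq_solvable p M b t.
Proof. by move=> tt' [y sz_y y_sol]; exists y; last exact: dvdz_sub_trans tt' y_sol. Qed.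

Section OddModulus.
Variables (p : nat) (p_odd : odd p).

Lemma half_mod_exp M : exists H : int, 2 * H = (p ^ M)%:Z + 1.
Proof.
exists (p ^ M)./2.+1%:Z; have := odd_double_half (p ^ M).
by rewrite oddX p_odd orbT -muln2; lia.
Qed.

Lemma odd_vec_approx M b w : size w = size b ->
  exists2 x, size x = size b & ((p ^ M)%:Z %| wsum sq b (odd_vec x) - wsum sq b w)%Z.
Proof.
move=> sz_w; have [H H_half] := half_mod_exp M.
exists [seq (v - 1) * H | v <- w]; first by rewrite size_map.
apply: wsum_cong => [|j]; first exact: sq_cong.
case: (ltnP j (size w)) => lt_j; last by rewrite !nth_default ?size_map // subrr dvdz0.
rewrite /odd_vec -map_comp (nth_map 0) //= mulrCA H_half.
by apply/dvdzP; exists (nth 0 w j - 1); ring.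
Qed.

Lemma pronic_solvableE M b n :
  pronic_solvable p M b n <-> sq_solvable p M b (8 * n%:Z + csum b).
Proof.
have coprime_4 : coprimez (p ^ M)%:Z 4.
  rewrite coprimezE; change (coprime (p ^ M) (2 ^ 2)).
  by rewrite coprimeXl // coprimeXr // coprimen2.
split=> [[x sz_x x_sol] | [w sz_w w_sol]].
  exists (odd_vec x); first by rewrite size_map.
  rewrite wsum_sq_odd_vec // (_ : _ - _ = - 4 * (wsum pronic b x - 2%:Z * n%:Z)).
    by rewrite dvdz_mull.
  by rewrite (_ : 2%:Z = 2) //; ring.
have [x sz_x x_w] := odd_vec_approx M sz_w.
exists x => //; rewrite -(Gauss_dvdzr _ coprime_4).
rewrite (_ : 4 * _ = (wsum sq b (odd_vec x) - wsum sq b w) - (8 * n%:Z + csum b - wsum sq b w)).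
  exact: rpredB.
by rewrite wsum_sq_odd_vec // (_ : 2%:Z = 2) //; ring.
Qed.

Lemma sqrt_one_mod M (r : int) : (p%:Z %| r - 1)%Z ->
  exists s : int, ((p ^ M)%:Z %| s ^+ 2 - r)%Z.
Proof.
move=> p_r; have [H H_half] := half_mod_exp 1; rewrite expn1 in H_half.
suff [s [_ s_sol]] : exists s : int, (p%:Z %| s - 1)%Z /\ ((p ^ M.+1)%:Z %| s ^+ 2 - r)%Z.
  by exists s; exact: dvdz_trans (dvdz_exp2l_nat p (leqnSn M)) s_sol.
elim: M => [|M [s [/dvdzP[k s_1] /dvdzP[e s_sol]]]].
  by exists 1; rewrite subrr dvdz0 expn1 -opprB rpredN.
set Q := p%:Z ^+ M; rewrite PoszX (exprSr p%:Z) -/Q in s_sol.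
(* Newton step: H inverts 2 modulo p and s = 1 (mod p). *)
exists (s - Q * p%:Z * e * H); split.
  by apply/dvdzP; exists (k - Q * e * H); rewrite -[s](subrK 1) s_1; ring.
have r_eq : r = s ^+ 2 - e * (Q * p%:Z) by rewrite -s_sol; ring.
have -> : (s - Q * p%:Z * e * H) ^+ 2 - r =
    e * Q * p%:Z * (1 - s * (2 * H)) + (Q * p%:Z) ^+ 2 * e ^+ 2 * H ^+ 2.
  by rewrite r_eq; ring.
have s_eq : s = k * p%:Z + 1 by rewrite -s_1 subrK.
rewrite H_half s_eq PoszX !exprSr -/Q; apply/dvdzP.
by exists (- e * (k + 1 + k * p%:Z) + Q * e ^+ 2 * H ^+ 2); ring.
Qed.

End OddModulus.

Section PrimeModulus.
Variables (p : nat) (p_prime : prime p).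

Lemma inv_mod_exp M (u : int) : ~ (p%:Z %| u)%Z -> exists h : int, ((p ^ M)%:Z %| u * h - 1)%Z.
Proof.
move=> p_u; have /eqP coprime_u : coprimez (p ^ M)%:Z u.
  rewrite coprimezE /= coprimeXl // prime_coprime //.
  by apply/negP => p_u'; apply: p_u; rewrite dvdzE.
have [v [h Bezout]] := Bezoutz (p ^ M)%:Z u; rewrite coprime_u in Bezout.
by exists h; apply/dvdzP; exists (- v); rewrite -Bezout; ring.
Qed.

Lemma int_pfactor (q : int) : q != 0 ->
  exists t (q0 : int), q = (p ^ t)%:Z * q0 /\ ~ (p%:Z %| q0)%Z.
Proof.
move=> q_neq0.
have q_gt0 : (0 < `|q|)%N by rewrite absz_gt0.
have [m p_m q_m] := pfactor_coprime p_prime q_gt0; set t := logn p `|q| in q_m *.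
exists t, ((-1) ^+ (q < 0)%R * m%:Z); split.
  by rewrite {1}(intEsign q) q_m PoszM; ring.
by rewrite dvdzE abszMsign /=; apply/negP; rewrite -prime_coprime.
Qed.

End PrimeModulus.

Section OddPrime.
Variables (p : nat) (p_prime : prime p) (p_odd : odd p).

Section ScaledContainment.
Variables (b : seq nat) (c : nat).
Hypotheses (c_gt0 : (0 < c)%N) (cZp_sub : scaled_Zp_sub_DQp p c b).

Lemma sq_solvable_scaled M (g : int) : sq_solvable p M b (c%:Z * g).
Proof.
have const_padic (u : int) : padic p (fun=> u) by move=> m; rewrite subrr dvdz0.
exact: (in_DQpP b (prime_gt0 p_prime) (const_padic _)).1 (cZp_sub (const_padic g)) M.
Qed.

Lemma sq_solvable_add_scaled M (y : seq int) (e : int) : size y = size b ->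
  sq_solvable p M b (wsum sq b y + c%:Z * e).
Proof.
move=> sz_y; have [u p_u c_u] := pfactor_coprime p_prime c_gt0.
rewrite prime_coprime // in p_u; set v := logn p c in c_u.
have p_u' : ~ (p%:Z %| u%:Z)%Z by rewrite dvdzE; apply/negP.
set q := wsum sq b y.
case: (classic ((p ^ v)%:Z %| q)%Z) => [/dvdzP[q' q_q'] | p_q].
  have [h u_h] := inv_mod_exp p_prime M p_u'.
  apply: sq_solvable_cong (sq_solvable_scaled M ((q' + u%:Z * e) * h)).
  rewrite q_q' c_u PoszM (_ : _ - _ = - ((p ^ v)%:Z * (q' + u%:Z * e) * (u%:Z * h - 1))).
    by rewrite rpredN dvdz_mull.
  ring.
(* Now v_p(q) < v_p(c): rescale y by a square root of the unit 1 + c e / q. *)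
have q_neq0 : q != 0 by apply/eqP => q_eq0; apply: p_q; rewrite q_eq0 dvdz0.
have [t [q0 [q_q0 p_q0]]] := int_pfactor p_prime q_neq0.
have lt_tv : (t < v)%N.
  by rewrite ltnNge; apply/negP => le_vt; apply: p_q; rewrite q_q0 dvdz_mulr // dvdz_exp2l_nat.
have [h q0_h] := inv_mod_exp p_prime M p_q0.
pose r := 1 + (p ^ (v - t))%:Z * u%:Z * e * h.
have [s s_r] : exists s : int, ((p ^ M)%:Z %| s ^+ 2 - r)%Z.
  apply: (sqrt_one_mod p_odd M); rewrite /r (addrC 1) addrK -!mulrA dvdz_mulr //.
  by have := dvdz_exp2l_nat p (_ : 1 <= v - t)%N; rewrite expn1; apply; rewrite subn_gt0.
exists [seq s * w | w <- y]; first by rewrite size_map.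
have pv : (p ^ v)%:Z = (p ^ t)%:Z * (p ^ (v - t))%:Z by rewrite -PoszM -expnD subnKC // ltnW.
rewrite wsum_sq_scale -/q.
rewrite (_ : _ - _ = - ((p ^ t)%:Z * q0 * (s ^+ 2 - r) + c%:Z * e * (q0 * h - 1))).
  by rewrite rpredN rpredD // dvdz_mull.
by rewrite /r q_q0 c_u PoszM pv; ring.
Qed.

End ScaledContainment.

Lemma pronic_solvable_del M a i n : (i < size a)%N -> (0 < nth 0%N a i)%N ->
  scaled_Zp_sub_DQp p (nth 0%N a i) (del a i) ->
  pronic_solvable p M a n -> pronic_solvable p M (del a i) n.
Proof.
move=> lt_i c_gt0 cZp_sub /(pronic_solvableE p_odd)[w sz_w w_sol].
apply/(pronic_solvableE p_odd).
set c := nth 0%N a i in c_gt0 cZp_sub w_sol *; set b := del a i in cZp_sub *.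
have sz_wb : size (delete w i) = size b by rewrite !size_delete ?sz_w.
apply: sq_solvable_cong (sq_solvable_add_scaled c_gt0 cZp_sub M (nth 0 w i ^+ 2 - 1) sz_wb).
rewrite -(insert_delete 0 (_ : i < size w)%N) ?sz_w // in w_sol.
rewrite wsum_insert // (csum_del lt_i) -/c -/b in w_sol.
by move: w_sol; rewrite /sq; congr (_ %| _)%Z; ring.
Qed.

End OddPrime.

Lemma dvdn_coef_gcd (d : nat) (s : seq nat) :
  (forall j, (j < size s)%N -> (d %| nth 0%N s j)%N) -> (d %| coef_gcd s)%N.
Proof.
elim: s => [|x s IH] d_s /=; first exact: dvdn0.
by rewrite dvdn_gcd (d_s 0%N isT) IH // => j; exact: (d_s j.+1).
Qed.

Lemma coef_gcd_dvdn (s : seq nat) j : (j < size s)%N -> (coef_gcd s %| nth 0%N s j)%N.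
Proof.
elim: s j => [|x s IH] [|j] //= lt_j; first exact: dvdn_gcdl.
exact: dvdn_trans (dvdn_gcdr _ _) (IH j lt_j).
Qed.

Lemma primitive_odd_coef b : primitive b -> exists2 j, (j < size b)%N & odd (nth 0%N b j).
Proof.
move=> prim_b; apply: NNPP => all_even.
have : (2 %| coef_gcd b)%N.
  apply: dvdn_coef_gcd => j lt_j; rewrite dvdn2; apply/negP => odd_j.
  by apply: all_even; exists j.
by rewrite prim_b.
Qed.

Lemma pronic_solvable_two_odd (B n M : nat) : odd B ->
  exists s : int, ((2 ^ M.+1)%:Z %| B%:Z * pronic s - 2%:Z * n%:Z)%Z.
Proof.
move=> odd_B; elim: M => [|M [s /dvdzP[e s_sol]]].
  by exists 0; rewrite /pronic mul0r mulr0 sub0r rpredN expn1 dvdz_mulr.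
have B_eq : B%:Z = 2 * (B./2)%:Z + 1.
  by have := odd_double_half B; rewrite odd_B -muln2; lia.
set m := (B./2)%:Z in B_eq; set Q := 2%:Z ^+ M.
rewrite PoszX (exprSr 2%:Z) -/Q in s_sol.
(* Newton step: the derivative B (2s + 1) is odd, so its square is 1 modulo 8. *)
exists (s - Q * 2 * e * B%:Z * (2 * s + 1)).
have -> : 2%:Z * n%:Z = B%:Z * pronic s - e * (Q * 2) by rewrite -s_sol; ring.
rewrite /pronic B_eq PoszX !exprSr -/Q; apply/dvdzP.
exists (- 2 * e * (2 * m * s + m + s) * (2 * m * s + m + s + 1)
        + Q * (2 * m + 1) ^+ 3 * e ^+ 2 * (2 * s + 1) ^+ 2).
ring.
Qed.

Lemma wsum_nseq0 F b : F 0 = 0 -> wsum F b (nseq (size b) 0) = 0.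
Proof. by move=> F0; apply: big1 => j _; rewrite nth_nseq; case: ifP; rewrite F0 mulr0. Qed.

Lemma pronic_solvable_two b n M : primitive b -> pronic_solvable 2 M b n.
Proof.
move=> /primitive_odd_coef[j lt_j odd_j]; have [s s_sol] := pronic_solvable_two_odd n M odd_j.
have sz0 : size (nseq (size (del b j)) (0 : int)) = size (del b j) by rewrite size_nseq.
exists (insert (nseq (size (del b j)) 0) j s); first exact: size_insert_del.
rewrite wsum_insert // wsum_nseq0 // addr0.
exact: dvdz_trans (dvdz_exp2l_nat 2 (leqnSn M)) s_sol.
Qed.

Lemma loc_represents_del_inv a i n : (i < size a)%N -> (0 < nth 0%N a i)%N ->
  primitive (del a i) ->
  (forall p, prime p -> odd p -> scaled_Zp_sub_DQp p (nth 0%N a i) (del a i)) ->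
  loc_represents a n -> loc_represents (del a i) n.
Proof.
move=> lt_i c_gt0 prim_b cZp_sub loc_n p p_prime; have p_gt0 := prime_gt0 p_prime.
apply/(padic_representsP _ _ p_gt0) => M.
have [-> | p_odd] := even_prime p_prime; first exact: pronic_solvable_two.
apply: (pronic_solvable_del p_prime p_odd lt_i c_gt0 (cZp_sub p p_prime p_odd)).
exact: (padic_representsP _ _ p_gt0).1 (loc_n p p_prime) M.
Qed.

Section OldRegular.
Variables (a : seq nat) (i : nat).
Hypotheses (lt_i : (i < size a)%N) (c_gt0 : (0 < nth 0%N a i)%N).
Hypothesis reps_del : forall n, (0 < n)%N -> represents a n -> represents (del a i) n.
Local Notation b := (del a i).
Local Notation c := (nth 0%N a i).

Lemma sq_solvable_sub_coef p M t : prime p -> odd p ->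
  sq_solvable p M b t -> sq_solvable p M b (t - c%:Z).
Proof.
move=> p_prime p_odd [w sz_w w_t].
have [x sz_x x_w] := odd_vec_approx p_odd M sz_w.
pose X := (p ^ M.+1)./2.
have X_odd : 2 * X%:Z + 1 = (p ^ M.+1)%:Z.
  by have := odd_double_half (p ^ M.+1); rewrite oddX p_odd orbT -muln2; lia.
have X_gt0 : (0 < X)%N.
  have p_gt2 : (2 < p)%N.
    by rewrite ltn_neqAle prime_gt1 // andbT; apply: contraTneq p_odd => <-.
  have : (p <= p ^ M.+1)%N by rewrite expnS leq_pmulr // expn_gt0 prime_gt0.
  lia.
(* Since 8 tri X = p^(2M+2) - 1, the coordinate x_i = X shifts 8 T by -c modulo p^M. *)
pose nz := wsum tri b x + c%:Z * tri X%:Z.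
have nz_gt0 : 0 < nz.
  have : 0 < tri X%:Z by have := tri_double X%:Z; rewrite /pronic; nia.
  by have := wsum_ge0 b x tri_ge0; have : 0 < c%:Z by []; nia.
have n_gt0 : (0 < `|nz|)%N by rewrite absz_gt0 gt_eqF.
have n_eq : `|nz|%N%:Z = nz by rewrite gez0_abs // ltW.
have [|x' [sz_x' x'_rep]] := reps_del n_gt0.
  exists (insert x i X%:Z); split; first exact: size_insert_del.
  by rewrite -[LHS]/(wsum tri a _) wsum_insert // n_eq addrC.
exists (odd_vec x'); first by rewrite size_map.
have x'_x : wsum sq b (odd_vec x') = wsum sq b (odd_vec x) + c%:Z * ((p ^ M.+1)%:Z ^+ 2 - 1).
  rewrite !wsum_sq_odd_vec // !wsum_pronic (_ : wsum tri b x' = nz); last by rewrite -n_eq.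
  by rewrite -X_odd -tri_odd_sq /nz; ring.
rewrite x'_x (_ : _ - _ = (t - wsum sq b w) - (wsum sq b (odd_vec x) - wsum sq b w)
                          - c%:Z * (p ^ M.+1)%:Z ^+ 2); last by ring.
apply: rpredB; first exact: rpredB.
by rewrite dvdz_mull // dvdz_exp // dvdz_exp2l_nat.
Qed.

Lemma sq_solvable_neg_mul_coef p M (k : nat) : prime p -> odd p ->
  sq_solvable p M b (- (k%:Z * c%:Z)).
Proof.
move=> p_prime p_odd; elim: k => [|k IH].
  by exists (nseq (size b) 0); rewrite ?size_nseq // wsum_nseq0 // mul0r oppr0 subr0 dvdz0.
apply: sq_solvable_cong (sq_solvable_sub_coef p_prime p_odd IH).
by rewrite intS (_ : _ - _ = 0) ?dvdz0 //; ring.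
Qed.

Lemma old_scaled_Zp_sub_DQp p : prime p -> odd p -> scaled_Zp_sub_DQp p c b.
Proof.
move=> p_prime p_odd g g_padic; have p_gt0 := prime_gt0 p_prime.
have cg_padic : padic p (fun m => c%:Z * g m) by move=> m; rewrite -mulrBr dvdz_mull.
apply/(in_DQpP b p_gt0 cg_padic) => M.
have P_neq0 : (p ^ M)%:Z != 0 by rewrite eqz_nat -lt0n expn_gt0 p_gt0.
set k := (- g M %% (p ^ M)%:Z)%Z.
have k_eq : `|k|%N%:Z = k by rewrite gez0_abs // modz_ge0.
apply: sq_solvable_cong (sq_solvable_neg_mul_coef M `|k| p_prime p_odd).
rewrite k_eq (_ : _ - _ = - (c%:Z * (- g M - k))); last by ring.
by rewrite rpredN dvdz_mull // dvdz_sub_modz.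
Qed.

Lemma old_primitive_del : primitive a -> primitive (del a i).
Proof.
move=> prim_a; have [|x [_ x_rep]] := reps_del c_gt0.
  exists (insert (nseq (size b) 0) i 1); split; first by apply: size_insert_del; rewrite ?size_nseq.
  by rewrite -[LHS]/(wsum tri a _) wsum_insert ?size_nseq // wsum_nseq0 // addr0 tri1 mulr1.
have gcd_b j : (j < size b)%N -> (coef_gcd b %| nth 0%N b j)%N by exact: coef_gcd_dvdn.
have gcd_c : (coef_gcd b %| c)%N.
  have := dvdzE (coef_gcd b) c; rewrite /= => <-; rewrite -[X in (_ %| X)%Z]x_rep.
  by apply: rpred_sum => j _; rewrite dvdz_mulr // dvdzE gcd_b.
apply/eqP; rewrite -dvdn1 -prim_a; apply: dvdn_coef_gcd => j lt_j.
have [-> // | j_neq_i] := eqVneq j i.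
have j_bump : bump i (unbump i j) = j by rewrite unbumpK // inE.
rewrite -j_bump -nth_delete // gcd_b // size_delete //.
by move: j_neq_i lt_j; rewrite /unbump; case: ltnP; lia.
Qed.

End OldRegular.

Local Close Scope ring_scope.

Theorem lemma3p1 (a : seq nat) :
  (3 <= size a)%N ->
  all (fun c => 0 < c)%N a ->
  primitive a ->
  (old_regular a <->
   exists i : nat, (i < size a)%N /\
     primitive (del a i) /\ regular (del a i) /\
     forall p : nat, prime p -> odd p -> scaled_Zp_sub_DQp p (nth 0%N a i) (del a i)).
Proof.
move=> _ pos_a prim_a.
have a_pos i : i < size a -> 0 < nth 0 a i by move/(all_nthP 0 pos_a).
split=> [[reg_a [i [lt_i same_reps]]] | [i [lt_i [prim_b [reg_b cZp_sub]]]]].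
  have reps_del n : 0 < n -> represents a n -> represents (del a i) n.
    by move=> n_gt0; apply: (same_reps n n_gt0).2.
  have c_gt0 := a_pos i lt_i.
  exists i; split=> //; split; first exact: old_primitive_del lt_i c_gt0 reps_del prim_a.
  split=> [n n_gt0 loc_n | p p_prime p_odd].
    by apply/(same_reps n n_gt0)/(reg_a n n_gt0); exact: loc_represents_del lt_i loc_n.
  exact (old_scaled_Zp_sub_DQp lt_i c_gt0 reps_del p_prime p_odd).
have loc_del n : loc_represents a n -> loc_represents (del a i) n.
  exact: loc_represents_del_inv (a_pos i lt_i) prim_b cZp_sub.
split=> [n n_gt0 /loc_del loc_n | ]; first exact: represents_del lt_i (reg_b n n_gt0 loc_n).
exists i; split=> // n n_gt0; split; first exact: represents_del.
by move=> /represents_padic/loc_del/reg_b; apply.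
Qed.
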